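(* Let $\mathcal{C}$ be a polyhedral complex with finitely many cells, each a convex polyhedron embedded in some Euclidean space, with injective isometric attaching maps, equipped with the induced Euclidean metric on each cell. Let $P_1,F_1,P_2,F_2,\dots,F_{k-1},P_k$ be a sequence of cells of $\mathcal{C}$ with $F_i\subseteq P_i\cap P_{i+1}$ for $i=1,\dots,k-1$, and let $x\in P_1$, $y\in P_k$. Let $p_0=x$, $p_k=y$ and $p_i\in F_i^\circ$ for $1\le i\le k-1$, where $F^\circ$ denotes the relative interior of $F$. Then the path formed by the segments $[p_{i-1},p_i]\subseteq P_i$ is the shortest path from $x$ to $y$ among paths passing through this sequence of cells and faces if and only if, for $i=1,\dots,k-1$, \[\pi_{F_i}\left(\frac{p_i-p_{i-1}}{\|p_i-p_{i-1}\|}\right)=\pi_{F_i}\left(\frac{p_{i+1}-p_i}{\|p_{i+1}-p_i\|}\right),\] where $\|\cdot\|$ is the Euclidean norm and $\pi_{F_i}$ denotes orthogonal projection onto the linear subspace parallel to the affine span of $F_i$ (the vector $p_i-p_{i-1}$ being computed in the Euclidean space of $P_i$ and $p_{i+1}-p_i$ in that of $P_{i+1}$, with the projections compared via the isometric identification of $F_i$).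
   Context: A path passing through the sequence of cells and faces means a path from $x$ to $y$ consisting of segments $[q_{i-1},q_i]\subseteq P_i$ with $q_0=x$, $q_k=y$, $q_i\in F_i$ for $1\le i\le k-1$; its length is $\sum_{i=1}^k\|q_i-q_{i-1}\|$. *)

From HB Require Import structures.
From mathcomp Require Import all_boot all_order all_algebra.
From mathcomp Require Import boolp classical_sets reals.

Set Implicit Arguments.
Unset Strict Implicit.
Unset Printing Implicit Defensive.
Import Order.TTheory GRing.Theory Num.Theory.
Local Open Scope ring_scope.
Local Open Scope classical_set_scope.

Section Defs.
Variable R : realType.

Definition dotv n (u v : 'rV[R]_n) : R := \sum_(j < n) u 0 j * v 0 j.
Definition normv n (v : 'rV[R]_n) : R := Num.sqrt (dotv v v).
Definition unitv n (v : 'rV[R]_n) : 'rV[R]_n := (normv v)^-1 *: v.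

Definition segment n (u v : 'rV[R]_n) : set 'rV[R]_n :=
  [set w | exists2 t : R, 0 <= t <= 1 & w = u + t *: (v - u)].

Definition polyhedron n (P : set 'rV[R]_n) : Prop :=
  exists m (A : 'M[R]_(m, n)) (b : 'rV[R]_m),
    P = [set x | forall i : 'I_m, dotv (row i A) x <= b 0 i].

Definition is_face n (G P : set 'rV[R]_n) : Prop :=
  exists (a : 'rV[R]_n) (c : R),
    (forall x, P x -> dotv a x <= c) /\ G = [set x | P x /\ dotv a x = c].

(** linear subspace parallel to the affine span of F: span of {a - b | a,b in F} *)
Definition dir n (F : set 'rV[R]_n) : set 'rV[R]_n :=
  [set v | exists m (c : 'I_m -> R) (a b : 'I_m -> 'rV[R]_n),
      (forall i, F (a i) /\ F (b i)) /\ v = \sum_(i < m) c i *: (a i - b i)].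

Definition relint n (F : set 'rV[R]_n) : set 'rV[R]_n :=
  [set x | F x /\ exists2 eps : R, 0 < eps &
             forall v, dir F v -> normv v < eps -> F (x + v)].

Definition orthproj n (L : set 'rV[R]_n) (v : 'rV[R]_n) : 'rV[R]_n :=
  xget 0 [set w | L w /\ forall l, L l -> dotv (v - w) l = 0].

(** A chain of cells and faces P_0, F_0, P_1, F_1, ..., F_(m-1), P_m
    (the paper's P_1,F_1,...,F_(k-1),P_k with k = m+1, shifted to start at 0).  Face F_j lives in R^(d j) and is attached to
    P_j by the affine map w |-> w A_j + a_j and to P_(j+1) by w |-> w B_j + b_j. *)
Unset Implicit Arguments.
Record chain := Chain {
  ch_m : nat;
  ch_n : nat -> nat;
  ch_P : forall j, set 'rV[R]_(ch_n j);
  ch_d : nat -> nat;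
  ch_F : forall j, set 'rV[R]_(ch_d j);
  ch_A : forall j, 'M[R]_(ch_d j, ch_n j);
  ch_a : forall j, 'rV[R]_(ch_n j);
  ch_B : forall j, 'M[R]_(ch_d j, (ch_n j.+1));
  ch_b : forall j, 'rV[R]_(ch_n j.+1) }.

Definition embl (C : chain) j (w : 'rV[R]_(ch_d C j)) : 'rV[R]_(ch_n C j) :=
  w *m ch_A C j + ch_a C j.
Definition embr (C : chain) j (w : 'rV[R]_(ch_d C j)) : 'rV[R]_(ch_n C j.+1) :=
  w *m ch_B C j + ch_b C j.

(** Well-formedness: cells are convex polyhedra; attaching maps are affine
    isometries (orthonormal rows); F_j is (isometrically identified with) a
    face of both P_j and P_(j+1). *)
Definition wf_chain (C : chain) : Prop :=
  (forall j, (j <= ch_m C)%N -> polyhedron (ch_P C j)) /\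
  (forall j, (j < ch_m C)%N ->
     ch_A C j *m (ch_A C j)^T = 1%:M /\ ch_B C j *m (ch_B C j)^T = 1%:M /\
     is_face (embl C j @` ch_F C j) (ch_P C j) /\
     is_face (embr C j @` ch_F C j) (ch_P C j.+1)).

(** A path from x to y through the chain, described by the start point s j and
    end point e j of its segment inside P_j (j = 0..m), in P_j's coordinates:
    s 0 = x, e m = y, e j and s (j+1) are the same point q_j of F_j,
    and [s j, e j] is contained in P_j. *)
Definition chain_path (C : chain) (x : 'rV[R]_(ch_n C 0))
  (y : 'rV[R]_(ch_n C (ch_m C))) (s e : forall j, 'rV[R]_(ch_n C j)) : Prop :=
  s 0%N = x /\ e (ch_m C) = y /\
  (forall j, (j < ch_m C)%N ->
     exists2 w, ch_F C j w & e j = embl C j w /\ s j.+1 = embr C j w) /\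
  (forall j, (j <= ch_m C)%N -> segment (s j) (e j) `<=` ch_P C j).

Definition chain_length (C : chain) (s e : forall j, 'rV[R]_(ch_n C j)) : R :=
  \sum_(0 <= j < (ch_m C).+1) normv (e j - s j).

Definition shortest_chain_path (C : chain) x y (s e : forall j, 'rV[R]_(ch_n C j)) :=
  chain_path C x y s e /\
  forall s' e', chain_path C x y s' e' -> chain_length C s e <= chain_length C s' e'.

End Defs.

Arguments Chain {R}.
Arguments ch_m {R}. Arguments ch_n {R}. Arguments ch_P {R}. Arguments ch_d {R}.
Arguments ch_F {R}. Arguments ch_A {R}. Arguments ch_a {R}. Arguments ch_B {R}.
Arguments ch_b {R}.
Arguments embl {R}. Arguments embr {R}. Arguments wf_chain {R}.
Arguments chain_path {R}. Arguments chain_length {R}.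
Arguments shortest_chain_path {R}.

From HB Require Import structures.
From mathcomp Require Import all_boot all_order all_algebra.
From mathcomp Require Import boolp classical_sets reals.
From mathcomp Require Import ring lra zify.
Import Order.TTheory GRing.Theory Num.Theory.
Set Implicit Arguments. Unset Strict Implicit.
Local Open Scope ring_scope.
Local Open Scope classical_set_scope.

(* Write [u_k] for the unit direction of the k-th segment.  If the projections
   of [u_k] and [u_(k+1)] on the face [F_k] agree at every breakpoint, then for
   any competing path the sum of the products [<u_k, e'_k - s'_k>] telescopes
   to the length of our path, the breakpoint terms cancelling since the
   breakpoints move inside [F_k]; by Cauchy-Schwarz that sum is at most the
   length of the competitor.  Conversely, moving the j-th breakpoint to
   [z_j + t l] with [l] parallel to [F_j] keeps it in [F_j] for small [t],
   since [z_j] is in the relative interior, and changes the length by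
   [t <u_j A_j^T - u_(j+1) B_j^T, l] + O(t^2); minimality kills the linear
   term. *)

Section Dot.
Variables (R : realType) (n : nat).
Implicit Types u v w : 'rV[R]_n.

Lemma dotvC u v : dotv u v = dotv v u.
Proof. by apply: eq_bigr => j _; rewrite mulrC. Qed.

Lemma dotvDl u v w : dotv (u + v) w = dotv u w + dotv v w.
Proof. by rewrite /dotv -big_split; apply: eq_bigr => j _; rewrite !mxE mulrDl. Qed.

Lemma dotvZl k u w : dotv (k *: u) w = k * dotv u w.
Proof. by rewrite /dotv mulr_sumr; apply: eq_bigr => j _; rewrite !mxE mulrA. Qed.

Lemma dotvNl u w : dotv (- u) w = - dotv u w.
Proof. by rewrite -scaleN1r dotvZl mulN1r. Qed.

Lemma dotvBl u v w : dotv (u - v) w = dotv u w - dotv v w.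
Proof. by rewrite dotvDl dotvNl. Qed.

Lemma dotvDr u v w : dotv w (u + v) = dotv w u + dotv w v.
Proof. by rewrite !(dotvC w) dotvDl. Qed.

Lemma dotvZr k u w : dotv w (k *: u) = k * dotv w u.
Proof. by rewrite !(dotvC w) dotvZl. Qed.

Lemma dotvBr u v w : dotv w (u - v) = dotv w u - dotv w v.
Proof. by rewrite !(dotvC w) dotvBl. Qed.

Lemma dotv0r w : dotv w 0 = 0.
Proof. by rewrite -(scale0r 0) dotvZr mul0r. Qed.

Lemma dotvv_ge0 v : 0 <= dotv v v.
Proof. by apply: sumr_ge0 => j _; rewrite -expr2 sqr_ge0. Qed.

Lemma dotvv_eq0 v : dotv v v = 0 -> v = 0.
Proof.
move=> /eqP; rewrite psumr_eq0 => [/allP vv0|j _]; last by rewrite -expr2 sqr_ge0.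
by apply/rowP => j; apply/eqP; rewrite mxE -sqrf_eq0 expr2 (eqP (vv0 j _)) ?mem_index_enum.
Qed.

Lemma dotv_mulmx d (u : 'rV[R]_d) (A : 'M[R]_(d, n)) w :
  dotv (u *m A) w = dotv u (w *m A^T).
Proof.
have dotvE m (a b : 'rV[R]_m) : dotv a b = (a *m b^T) 0 0.
  by rewrite !mxE; apply: eq_bigr => j _; rewrite !mxE.
by rewrite !dotvE trmx_mul trmxK mulmxA.
Qed.

End Dot.

Section OrthogonalProjection.
Variables (R : realType) (n : nat).
Implicit Types (u v w : 'rV[R]_n) (X : seq 'rV[R]_n).

(* One Gram-Schmidt step: correct the projection [p] of [v] on [<<X>>] along
   the component [r] of [x] orthogonal to [<<X>>]. *)
Lemma orthproj_span_exists X v :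
  exists2 w, w \in <<X>>%VS & forall l, l \in <<X>>%VS -> dotv (v - w) l = 0.
Proof.
elim: X v => [|x X IH] v.
  exists 0; first by rewrite mem0v.
  by move=> l; rewrite span_nil memv0 => /eqP ->; rewrite dotv0r.
have [p Xp vp_perp] := IH v; have [q Xq xq_perp] := IH x.
pose r := x - q; pose c := dotv (v - p) r / dotv r r.
have c_def : dotv (v - p) r = c * dotv r r.
  have [/dotvv_eq0 r0|r0] := eqVneq (dotv r r) 0; last by rewrite mulfVK.
  by rewrite r0 !dotv0r mulr0.
have XxX : (<<X>> <= <<x :: X>>)%VS by rewrite span_cons addvSr.
exists (p + c *: r).
  have xX : x \in <<x :: X>>%VS by rewrite memv_span ?mem_head.
  by rewrite memvD ?memvZ ?memvB //; apply: (subvP XxX).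
have perp_X l : l \in <<X>>%VS -> dotv (v - (p + c *: r)) l = 0.
  by move=> Xl; rewrite opprD addrA dotvBl dotvZl vp_perp // xq_perp // mulr0 subr0.
move=> l; rewrite span_cons => /memv_addP [_ /vlineP [k ->] [l' Xl' ->]].
rewrite dotvDr (perp_X l') // addr0 dotvZr -[x](subrK q) -/r dotvDr (perp_X q) //.
by rewrite addr0 opprD addrA dotvBl dotvZl c_def subrr mulr0.
Qed.

Variable L : set 'rV[R]_n.
Hypotheses (L0 : L 0) (LD : forall u v, L u -> L v -> L (u + v))
  (LZ : forall k u, L u -> L (k *: u)).

Lemma span_subset X : (forall x, x \in X -> L x) -> forall v, v \in <<X>>%VS -> L v.
Proof.
elim: X => [|x X IH] XL v; first by rewrite span_nil memv0 => /eqP ->.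
rewrite span_cons => /memv_addP [_ /vlineP [k ->] [l Xl ->]].
by apply: LD; [apply/LZ/XL; rewrite mem_head | apply: IH Xl => y Xy; apply/XL/mem_behead].
Qed.

(* A free list in [L] that does not span [L] extends to a longer one, and free
   lists are no longer than the dimension. *)
Lemma spanning_list_exists :
  exists2 X, (forall x, x \in X -> L x) & forall v, L v -> v \in <<X>>%VS.
Proof.
pose N := \dim (fullv : {vspace 'rV[R]_n}).
suff ext k X : (N - size X <= k)%N -> free X -> (forall x, x \in X -> L x) ->
    exists2 X, (forall x, x \in X -> L x) & forall v, L v -> v \in <<X>>%VS.
  by apply: (ext N [::]); rewrite ?subn0 ?nil_free.
have size_free (Y : seq 'rV[R]_n) : free Y -> (size Y <= N)%N.
  by move=> /eqP <-; apply: dimvS; apply: subvf.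
elim: k X => [|k IH] X Xk Xfree XL.
  exists X => // v Lv; apply/negPn/negP => vX.
  have vXfree : free (v :: X) by rewrite free_cons vX.
  by have /= := size_free _ vXfree; lia.
have [[v [Lv vX]]|] := pselect (exists v, L v /\ v \notin <<X>>%VS).
  have vXfree : free (v :: X) by rewrite free_cons vX.
  apply: (IH (v :: X)) => //; last by move=> y; rewrite inE => /predU1P [->|/XL].
  by have /= := size_free _ vXfree; lia.
move=> noext; exists X => // v Lv; apply/negPn/negP => vX.
by apply: noext; exists v.
Qed.

Lemma orthproj_perp v l : L l -> dotv (v - orthproj L v) l = 0.
Proof.
have [X XL LX] := spanning_list_exists.
have [w Xw perp] := orthproj_span_exists X v.
have : exists w, L w /\ forall l, L l -> dotv (v - w) l = 0.
  by exists w; split; [exact: (span_subset XL) | move=> k /LX/perp].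
by move=> /(xgetPex 0) [_]; apply.
Qed.

Lemma orthproj_eq u v :
  orthproj L u = orthproj L v <-> forall l, L l -> dotv (u - v) l = 0.
Proof.
split => [uv l Ll | uv_perp].
  have -> : u - v = (u - orthproj L u) - (v - orthproj L v).
    by rewrite uv opprB addrA subrK.
  by rewrite dotvBl !orthproj_perp // subrr.
have vu_perp l : L l -> dotv (v - u) l = 0.
  by move=> Ll; rewrite -opprB dotvNl uv_perp ?oppr0.
have split_diff (a b w : 'rV[R]_n) l : dotv (a - w) l = dotv (a - b) l + dotv (b - w) l.
  by rewrite -dotvDl addrA subrK.
rewrite /orthproj; congr xget; apply/funext => w; apply/propext.
split=> -[Lw perp]; split=> // l Ll.
  by rewrite (split_diff _ u) vu_perp ?perp ?add0r.
by rewrite (split_diff _ v) uv_perp ?perp ?add0r.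
Qed.

End OrthogonalProjection.

Section Direction.
Variables (R : realType) (n : nat) (F : set 'rV[R]_n).

Lemma dir0 : dir F 0.
Proof.
exists 0%N, (fun=> 0), (fun=> 0), (fun=> 0).
by split; [case | rewrite big_ord0].
Qed.

Lemma dirD u v : dir F u -> dir F v -> dir F (u + v).
Proof.
move=> [m1 [c1 [a1 [b1 [F1 ->]]]]] [m2 [c2 [a2 [b2 [F2 ->]]]]].
pose glue T (f1 : 'I_m1 -> T) (f2 : 'I_m2 -> T) i :=
  match split i with inl i1 => f1 i1 | inr i2 => f2 i2 end.
exists (m1 + m2)%N, (glue _ c1 c2), (glue _ a1 a2), (glue _ b1 b2); split.
  by move=> i; rewrite /glue; case: split.
by rewrite big_split_ord /glue; congr (_ + _); apply: eq_bigr => i _;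
  rewrite ?(unsplitK (inl i)) ?(unsplitK (inr i)).
Qed.

Lemma dirZ k u : dir F u -> dir F (k *: u).
Proof.
move=> [m [c [a [b [Fab ->]]]]]; exists m, (fun i => k * c i), a, b; split => //.
by rewrite scaler_sumr; apply: eq_bigr => i _; rewrite scalerA.
Qed.

Lemma dir_diff a b : F a -> F b -> dir F (a - b).
Proof.
move=> Fa Fb; exists 1%N, (fun=> 1), (fun=> a), (fun=> b).
by rewrite big_ord1 scale1r.
Qed.

End Direction.

Section Norm.
Variables (R : realType) (n : nat).
Implicit Types u v a : 'rV[R]_n.

Lemma normv_sq v : normv v ^+ 2 = dotv v v.
Proof. by rewrite sqr_sqrtr // dotvv_ge0. Qed.

Lemma normv_gt0 v : v != 0 -> 0 < normv v.
Proof.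
move=> v0; rewrite sqrtr_gt0 lt_def dotvv_ge0 andbT.
by apply: contra v0 => /eqP/dotvv_eq0 ->.
Qed.

Lemma normv_lt v (eps : R) : 0 < eps -> dotv v v < eps ^+ 2 -> normv v < eps.
Proof.
move=> eps0 vv_lt; rewrite -[eps]ger0_norm ?ltW // -sqrtr_sqr ltr_sqrt //.
by rewrite exprn_gt0.
Qed.

(* Expand [0 <= |b u - a v|^2] with [a = |u|], [b = |v|]. *)
Lemma cauchy_schwarz u v : dotv u v <= normv u * normv v.
Proof.
have [->|u0] := eqVneq u 0; first by rewrite dotvC dotv0r mulr_ge0 ?sqrtr_ge0.
have [->|v0] := eqVneq v 0; first by rewrite dotv0r mulr_ge0 ?sqrtr_ge0.
have a0 := normv_gt0 u0; have b0 := normv_gt0 v0.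
have := dotvv_ge0 (normv v *: u - normv u *: v).
rewrite !dotvBl !dotvBr !dotvZl !dotvZr -!normv_sq (dotvC v u).
set a := normv u; set b := normv v; set d := dotv u v => sq_ge0.
have : 0 <= 2 * (a * b) * (a * b - d) by nra.
by rewrite pmulr_rge0 ?mulr_gt0 // subr_ge0.
Qed.

Lemma dotv_unitv_self a : a != 0 -> dotv (unitv a) a = normv a.
Proof.
move=> a0; rewrite /unitv dotvZl -normv_sq expr2 mulKf //.
by rewrite gt_eqF ?normv_gt0.
Qed.

Lemma dotv_unitv_le a v : a != 0 -> dotv (unitv a) v <= normv v.
Proof.
by move=> a0; rewrite /unitv dotvZl ler_pdivrMl ?normv_gt0 ?cauchy_schwarz.
Qed.

(* The right-hand side minus the left-hand side is
   [(|a| - |a + t v|)^2 / (2 |a|)]. *)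
Lemma normvDZ_le a v (t : R) : a != 0 ->
  normv (a + t *: v) <=
  normv a + t * dotv (unitv a) v + t ^+ 2 * (dotv v v / (2 * normv a)).
Proof.
move=> a0; have a_gt0 := normv_gt0 a0.
have sq : normv (a + t *: v) ^+ 2 =
          normv a ^+ 2 + 2 * t * dotv a v + t ^+ 2 * dotv v v.
  rewrite !normv_sq !dotvDl !dotvDr !dotvZl !dotvZr (dotvC v a); ring.
have -> : normv a + t * dotv (unitv a) v + t ^+ 2 * (dotv v v / (2 * normv a))
    = (normv a ^+ 2 + normv (a + t *: v) ^+ 2) / (2 * normv a).
  by rewrite sq /unitv dotvZl; field; rewrite gt_eqF.
rewrite ler_pdivlMr ?mulr_gt0 // -subr_ge0.
set N := normv a; set Q := normv _.
by rewrite (_ : _ - _ = (N - Q) ^+ 2) ?sqr_ge0 //; ring.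
Qed.

End Norm.

(* If [c != 0], the step [t = - c / D] with [D = 1 + |K| + c^2 N / eps^2] is
   admissible and makes [t c + t^2 K] negative. *)
Lemma first_order_coef_eq0 (R : realFieldType) (c K N eps : R) : 0 <= N -> 0 < eps ->
  (forall t, t ^+ 2 * N < eps ^+ 2 -> 0 <= t * c + t ^+ 2 * K) -> c = 0.
Proof.
move=> N0 eps0 ge0; apply/eqP; apply: contraT => c0; apply/negP => _.
have eps2 : 0 < eps ^+ 2 by rewrite exprn_gt0.
have c2 : 0 < c ^+ 2 by rewrite lt_def sqr_ge0 sqrf_eq0 c0.
pose M := c ^+ 2 * N / eps ^+ 2.
have M0 : 0 <= M by rewrite /M divr_ge0 ?(ltW eps2) // mulr_ge0 ?sqr_ge0.
have NM : c ^+ 2 * N = M * eps ^+ 2 by rewrite /M mulfVK ?gt_eqF.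
pose D := 1 + `|K| + M.
have D0 : 0 < D by rewrite /D; have := normr_ge0 K; lra.
pose tau := D^-1.
have tau0 : 0 < tau by rewrite invr_gt0.
have tauD : tau * D = 1 by rewrite /tau mulVf ?gt_eqF.
have tau1 : tau <= 1 by move: tauD; rewrite /D; have := normr_ge0 K; nra.
have tauK : tau * K < 1 by move: tauD; rewrite /D; have := ler_norm K; nra.
have tauM : tau * M < 1 by move: tauD; rewrite /D; have := normr_ge0 K; nra.
have N1 : 0 <= c ^+ 2 * N by rewrite mulr_ge0 ?sqr_ge0.
have small : (- c * tau) ^+ 2 * N < eps ^+ 2.
  have -> : (- c * tau) ^+ 2 * N = tau * (tau * (c ^+ 2 * N)) by ring.
  rewrite NM in N1 *.
  have tauX : tau * (M * eps ^+ 2) < eps ^+ 2 by nra.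
  have := mulr_ge0 (ltW tau0) N1.
  nra.
have := ge0 _ small.
have -> : - c * tau * c + (- c * tau) ^+ 2 * K = c ^+ 2 * tau * (tau * K - 1).
  by ring.
have := mulr_gt0 c2 tau0; nra.
Qed.

Lemma sum_nat_change2 (V : zmodType) (N j : nat) (f f' : nat -> V) :
  (j.+1 < N)%N -> (forall k, k != j -> k != j.+1 -> f' k = f k) ->
  \sum_(0 <= k < N) f' k =
  \sum_(0 <= k < N) f k + (f' j - f j) + (f' j.+1 - f j.+1).
Proof.
move=> jN f'f.
have delta i (c : V) : (i < N)%N -> \sum_(0 <= k < N) (if k == i then c else 0) = c.
  by move=> iN; rewrite -big_mkcond big_nat1_eq /= iN.
rewrite -(delta j (f' j - f j)) 1?ltnW // -(delta j.+1 (f' j.+1 - f j.+1)) //.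
rewrite -!big_split; apply: eq_bigr => k _ /=.
have [->|kj] := eqVneq k j.
  by rewrite (ltn_eqF (ltnSn j)) addr0 addrC subrK.
have [->|kj1] := eqVneq k j.+1.
  by rewrite addr0 addrC subrK.
by rewrite !addr0 f'f.
Qed.

Lemma sum_nat_shift_diff (V : zmodType) (m : nat) (f g : nat -> V) :
  f m = 0 -> g 0%N = 0 ->
  \sum_(0 <= k < m.+1) (f k - g k) = \sum_(0 <= k < m) (f k - g k.+1).
Proof.
move=> fm0 g00.
by rewrite sumrB big_nat_recr // big_nat_recl //= fm0 g00 addr0 add0r -sumrB.
Qed.

Lemma polyhedron_convex (R : realType) n (P : set 'rV[R]_n) u v :
  polyhedron P -> P u -> P v -> segment u v `<=` P.
Proof.
move=> [m [A [b ->]]] Pu Pv w [t /andP [t0 t1] ->] i.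
rewrite dotvDr dotvZr dotvBr.
have := Pu i; have := Pv i; nra.
Qed.

Lemma face_subset (R : realType) n (G P : set 'rV[R]_n) : is_face G P -> G `<=` P.
Proof. by move=> [a [c [_ ->]]] x []. Qed.

Section Chain.
Variables (R : realType) (C : chain R).
Local Notation m := (ch_m C).
Implicit Types (s e : forall k, 'rV[R]_(ch_n C k)) (z : forall k, 'rV[R]_(ch_d C k)).

Lemma emblB k w w' : embl C k w' - embl C k w = (w' - w) *m ch_A C k.
Proof. by rewrite /embl mulmxBl opprD addrACA subrr addr0. Qed.

Lemma embrB k w w' : embr C k w' - embr C k w = (w' - w) *m ch_B C k.
Proof. by rewrite /embr mulmxBl opprD addrACA subrr addr0. Qed.

Lemma emblD k w v : embl C k (w + v) = embl C k w + v *m ch_A C k.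
Proof. by rewrite /embl mulmxDl addrAC. Qed.

Lemma embrD k w v : embr C k (w + v) = embr C k w + v *m ch_B C k.
Proof. by rewrite /embr mulmxDl addrAC. Qed.

Definition breakpoints s e z := forall k, (k < m)%N ->
  [/\ ch_F C k (z k), e k = embl C k (z k) & s k.+1 = embr C k (z k)].

Definition balanced_at s e j := forall l, dir (ch_F C j) l ->
  dotv (unitv (e j - s j) *m (ch_A C j)^T - unitv (e j.+1 - s j.+1) *m (ch_B C j)^T) l = 0.

Lemma chain_length_move_breakpoint s e j w : (j < m)%N ->
  chain_length C (dfwith s (embr C j w)) (dfwith e (embl C j w)) =
  chain_length C s e + (normv (embl C j w - s j) - normv (e j - s j))
                     + (normv (e j.+1 - embr C j w) - normv (e j.+1 - s j.+1)).
Proof.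
move=> jm; rewrite /chain_length (sum_nat_change2 (j := j) (f := fun k => normv (e k - s k))).
- by rewrite dfwith_in dfwith_out ?(gtn_eqF (ltnSn j)) // dfwith_in dfwith_out
    ?(ltn_eqF (ltnSn j)).
- by rewrite ltnS.
by move=> k kj kj1; rewrite !dfwith_out 1?eq_sym.
Qed.

Lemma shortest_of_balanced x y s e z :
  chain_path C x y s e -> breakpoints s e z ->
  (forall k, (k <= m)%N -> e k != s k) ->
  (forall j, (j < m)%N -> balanced_at s e j) ->
  shortest_chain_path C x y s e.
Proof.
move=> path brk ne bal; split=> // s' e' [s'0 [e'm [brk' _]]].
have [s0 [em _]] := path.
pose u k := unitv (e k - s k).
apply: (@le_trans _ _ (\sum_(0 <= k < m.+1) dotv (u k) (e' k - s' k))); last first.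
  by apply: ler_sum_nat => k /andP [_ km]; apply: dotv_unitv_le; rewrite subr_eq0 ne.
have -> : \sum_(0 <= k < m.+1) dotv (u k) (e' k - s' k) = chain_length C s e +
    \sum_(0 <= k < m.+1) (dotv (u k) (e' k - e k) - dotv (u k) (s' k - s k)).
  rewrite /chain_length -big_split; apply: eq_big_nat => k /andP [_ km].
  by rewrite /= /u -dotv_unitv_self ?subr_eq0 ?ne // !dotvBr; ring.
rewrite sum_nat_shift_diff; last 2 first.
- by rewrite e'm em subrr dotv0r.
- by rewrite s'0 s0 subrr dotv0r.
rewrite big_nat_cond big1 ?addr0 // => k /andP [/andP [_ km] _].
have [w' Fw' [e'k s'k]] := brk' k km; have [Fz ek sk] := brk k km.
rewrite e'k s'k ek sk emblB embrB !(dotvC (u _)) !dotv_mulmx -dotvBr dotvC.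
by apply: bal => //; apply: dir_diff.
Qed.

Hypothesis wfC : wf_chain C.

Lemma embl_cell k w : (k < m)%N -> ch_F C k w -> ch_P C k (embl C k w).
Proof.
by move=> km Fw; have [_ [_ [face _]]] := wfC.2 k km; apply: face_subset face _ _; exists w.
Qed.

Lemma embr_cell k w : (k < m)%N -> ch_F C k w -> ch_P C k.+1 (embr C k w).
Proof.
by move=> km Fw; have [_ [_ [_ face]]] := wfC.2 k km; apply: face_subset face _ _; exists w.
Qed.

Lemma chain_path_of_breakpoints x y s e z :
  ch_P C 0 x -> ch_P C m y -> s 0%N = x -> e m = y -> breakpoints s e z ->
  chain_path C x y s e.
Proof.
move=> Px Py s0 em brk; do 3![split=> //]; first by move=> k /brk [Fz ek sk]; exists (z k).
move=> k km; apply: polyhedron_convex; first exact: wfC.1.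
  case: k km => [|k] km; first by rewrite s0.
  by have [Fz _ ->] := brk k km; apply: embr_cell.
have [->|km'] := eqVneq k m; first by rewrite em.
have km'' : (k < m)%N by rewrite ltn_neqAle km' km.
by have [Fz -> _] := brk k km''; apply: embl_cell.
Qed.

Lemma chain_path_move_breakpoint x y s e z j w :
  ch_P C 0 x -> ch_P C m y -> s 0%N = x -> e m = y -> breakpoints s e z ->
  (j < m)%N -> ch_F C j w ->
  chain_path C x y (dfwith s (embr C j w)) (dfwith e (embl C j w)).
Proof.
move=> Px Py s0 em brk jm Fw.
apply: (chain_path_of_breakpoints (z := dfwith z w)) => //.
- by rewrite dfwith_out.
- by rewrite dfwith_out // ltn_eqF.
move=> k km; have [->|kj] := eqVneq k j; first by rewrite !dfwith_in.
have jk : j != k by rewrite eq_sym.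
by rewrite !dfwith_out //; apply: brk.
Qed.

Lemma balanced_of_shortest x y s e z :
  ch_P C 0 x -> ch_P C m y -> s 0%N = x -> e m = y -> breakpoints s e z ->
  (forall k, (k < m)%N -> relint (ch_F C k) (z k)) ->
  (forall k, (k <= m)%N -> e k != s k) ->
  shortest_chain_path C x y s e -> forall j, (j < m)%N -> balanced_at s e j.
Proof.
move=> Px Py s0 em brk zint ne [_ short] j jm l Fl.
have [_ ek sk] := brk j jm; have [_ [eps eps0 near]] := zint j jm.
set A := ch_A C j; set B := ch_B C j.
set a := e j - s j; set b := e j.+1 - s j.+1.
have a0 : a != 0 by rewrite subr_eq0 ne // ltnW.
have b0 : b != 0 by rewrite subr_eq0 ne.
pose K := dotv (l *m A) (l *m A) / (2 * normv a) +
          dotv (l *m B) (l *m B) / (2 * normv b).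
have : dotv (unitv a) (l *m A) - dotv (unitv b) (l *m B) = 0.
  apply: (first_order_coef_eq0 (K := K) (dotvv_ge0 l) eps0) => t small.
  have Fzt : ch_F C j (z j + t *: l).
    apply: near; first exact: dirZ.
    by apply: normv_lt; rewrite // dotvZl dotvZr mulrA -expr2.
  have := short _ _ (chain_path_move_breakpoint Px Py s0 em brk jm Fzt).
  rewrite chain_length_move_breakpoint //.
  have -> : embl C j (z j + t *: l) - s j = a + t *: (l *m A).
    by rewrite emblD -ek -scalemxAl addrAC.
  have -> : e j.+1 - embr C j (z j + t *: l) = b + (- t) *: (l *m B).
    by rewrite embrD -sk -scalemxAl opprD addrA scaleNr.
  have := normvDZ_le (l *m A) t a0; have := normvDZ_le (l *m B) (- t) b0.
  rewrite sqrrN mulNr /K !mulrDr; lra.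
by rewrite dotvBl !dotv_mulmx !trmxK.
Qed.

End Chain.

Theorem lemma5p1 (R : realType) (C : chain R)
  (x : 'rV[R]_(ch_n C 0)) (y : 'rV[R]_(ch_n C (ch_m C)))
  (z : forall j, 'rV[R]_(ch_d C j)) (s e : forall j, 'rV[R]_(ch_n C j)) :
  wf_chain C ->
  ch_P C 0 x -> ch_P C (ch_m C) y ->
  (forall j, (j < ch_m C)%N -> relint (ch_F C j) (z j)) ->
  s 0%N = x -> e (ch_m C) = y ->
  (forall j, (j < ch_m C)%N -> e j = embl C j (z j) /\ s j.+1 = embr C j (z j)) ->
  (forall j, (j <= ch_m C)%N -> e j != s j) ->
  (shortest_chain_path C x y s e <->
   forall j, (j < ch_m C)%N ->
     orthproj (dir (ch_F C j)) (unitv (e j - s j) *m (ch_A C j)^T) =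
     orthproj (dir (ch_F C j)) (unitv (e j.+1 - s j.+1) *m (ch_B C j)^T)).
Proof.
move=> wfC Px Py zint s0 em ez ne.
have brk : breakpoints s e z.
  by move=> k km; have [Fz _] := zint k km; have [ek sk] := ez k km.
have balancedE j : balanced_at s e j <->
    orthproj (dir (ch_F C j)) (unitv (e j - s j) *m (ch_A C j)^T) =
    orthproj (dir (ch_F C j)) (unitv (e j.+1 - s j.+1) *m (ch_B C j)^T).
  by apply: iff_sym; apply: orthproj_eq; [exact: dir0 | exact: dirD | exact: dirZ].
split=> [short j jm | bal].
  by apply/balancedE; apply: (balanced_of_shortest wfC Px Py s0 em brk zint ne short).
apply: (shortest_of_balanced _ brk ne) => [|j jm]; last exact/balancedE/bal.
exact: (chain_path_of_breakpoints wfC Px Py s0 em brk).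
Qed.
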